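(* For every instance $I$ of the Bilevel Shortest Path problem (on a directed or an undirected graph), $\mathrm{OPT}_{\mathrm{str}}(I)\le\mathrm{OPT}_{\mathrm{weak}}(I)$.
   Context: An instance is $I=(G,E^\ell,E^f,s,t,c,d)$: $G=(V,E)$ a simple directed or undirected graph, $E=E^\ell\cup E^f$ a partition into leader's and follower's edges, $s,t\in V$, $c,d:E\to\mathbb{R}_{\ge0}$; $f(Z)=\sum_{e\in Z}f(e)$. Paths are simple, identified with edge sets; $\mathcal P_{st}$ (the $s$-$t$-paths) is nonempty. $\mathrm{OPT}_{\mathrm{str}}(I)=\min c(X\cup Y)$ over $X\subseteq E^\ell$, $Y\in\arg\min\{d(Y'):Y'\subseteq E^f,\ X\cup Y'\in\mathcal P_{st}\}$. $\mathrm{OPT}_{\mathrm{weak}}(I)$ is the same but with the follower's constraint that $X\cup Y'$ contains some path of $\mathcal P_{st}$. Leader choices making the follower's problem infeasible are infeasible; optimistic setting: among follower-optimal responses the one minimizing the leader's cost is chosen. *)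

From HB Require Import structures.
From mathcomp Require Import all_boot all_order all_algebra.
From mathcomp Require Import boolp classical_sets reals constructive_ereal ereal.
Set Implicit Arguments. Unset Strict Implicit. Unset Printing Implicit Defensive.
Import Order.TTheory GRing.Theory Num.Theory.
Local Open Scope ring_scope.
Section BSP.
Variables (V E : finType).
(* A graph on vertex set V with edge set E; edge e has endpoints tl e, hd e.
   If [directed] is true, e is the arc (tl e, hd e); otherwise e is the
   undirected edge {tl e, hd e}. *)
Variables (directed : bool) (tl hd : E -> V).

Definition simple_graph : Prop :=
  (forall e, tl e != hd e) /\
  (forall e e', (if directed then (tl e, hd e) == (tl e', hd e')
                 else ((tl e == tl e') && (hd e == hd e')) ||
                      ((tl e == hd e') && (hd e == tl e'))) ->
                e = e').

Definition joins (e : E) (u v : V) : bool :=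
  if directed then (tl e == u) && (hd e == v)
  else ((tl e == u) && (hd e == v)) || ((tl e == v) && (hd e == u)).

(* P (an edge set) is a simple s-t path: there are pairwise distinct vertices
   s = v_0, v_1, ..., v_k = t and edges e_1..e_k with e_i joining v_(i-1), v_i,
   and P = {e_1, ..., e_k}. *)
Definition st_path (s t : V) (P : {set E}) : Prop :=
  exists (vs : seq V) (es : seq E),
    [/\ size es = size vs, uniq (s :: vs), last s vs = t,
        all (fun p => joins p.1 p.2.1 p.2.2) (zip es (zip (s :: vs) vs))
      & P = [set e in es]].
End BSP.

Definition cost (R : numDomainType) (E : finType) (f : E -> R) (Z : {set E}) : R :=
  \sum_(e in Z) f e.

Section Bilevel.
Variables (R : realType) (V E : finType) (directed : bool) (tl hd : E -> V).
Variables (EL : {set E}) (s t : V) (c d : E -> R).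
(* Leader's edges EL, follower's edges ~: EL. *)

Definition follower_opt_str (X Y : {set E}) : Prop :=
  [/\ Y \subset ~: EL, st_path directed tl hd s t (X :|: Y)
    & forall Y' : {set E}, Y' \subset ~: EL -> st_path directed tl hd s t (X :|: Y') ->
                 cost d Y <= cost d Y'].

Definition contains_st_path (Z : {set E}) : Prop :=
  exists P, st_path directed tl hd s t P /\ P \subset Z.

Definition follower_opt_weak (X Y : {set E}) : Prop :=
  [/\ Y \subset ~: EL, contains_st_path (X :|: Y)
    & forall Y' : {set E}, Y' \subset ~: EL -> contains_st_path (X :|: Y') ->
                 cost d Y <= cost d Y'].

(* Optimal values (optimistic setting; infeasible leader choices excluded);
   the infimum of the empty set is +oo. *)
Local Open Scope classical_set_scope.
Definition OPT_str : \bar R :=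
  ereal_inf [set (cost c (p.1 :|: p.2)%SET)%:E |
              p in [set p : {set E} * {set E} |
                    (p.1 \subset EL)%SET /\ follower_opt_str p.1 p.2]].

Definition OPT_weak : \bar R :=
  ereal_inf [set (cost c (p.1 :|: p.2)%SET)%:E |
              p in [set p : {set E} * {set E} |
                    (p.1 \subset EL)%SET /\ follower_opt_weak p.1 p.2]].
End Bilevel.

From HB Require Import structures.
From mathcomp Require Import all_boot all_order all_algebra.
From mathcomp Require Import boolp classical_sets reals constructive_ereal ereal.
Import Order.TTheory GRing.Theory Num.Theory.
Local Open Scope ring_scope.

(* Every pair (X, Y) feasible for the weak model contains an s-t path P.
   Splitting P into its leader part P ∩ E^l and its follower part P \ E^l
   gives a pair feasible for the strong model: any strong response Y' to
   P ∩ E^l is also a weak response to X, so d(Y) <= d(Y'), and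
   d(P \ E^l) <= d(Y) because P \ E^l ⊆ Y and d >= 0.  Its value c(P) is at
   most c(X ∪ Y) because c >= 0. *)

Lemma le_cost {R : numDomainType} {E : finType} {f : E -> R} {A B : {set E}} :
  (forall e, 0 <= f e) -> A \subset B -> cost f A <= cost f B.
Proof.
move=> f_ge0 AB; rewrite /cost (big_setID (A := B) A) (finset.setIidPr AB) /= lerDl.
exact: sumr_ge0.
Qed.

Lemma subset_splitU {T : finType} {A P X Y : {set T}} :
  X \subset A -> Y \subset ~: A -> P \subset X :|: Y ->
  (P :&: A \subset X) && (P :\: A \subset Y).
Proof.
move=> /fintype.subsetP XA /fintype.subsetP YA /fintype.subsetP PXY.
apply/andP; split; apply/fintype.subsetP => e; rewrite !inE.
- case/andP=> eP eA; case/setUP: (PXY e eP) => // /YA.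
  by rewrite inE eA.
- case/andP=> eA eP; case/setUP: (PXY e eP) => // /XA.
  by rewrite (negbTE eA).
Qed.

Section Restriction.
Variables (R : realType) (V E : finType) (directed : bool) (tl hd : E -> V).
Variables (EL : {set E}) (s t : V) (d : E -> R).
Hypothesis d_ge0 : forall e, 0 <= d e.

Lemma follower_opt_weak_restrict (X Y P : {set E}) :
  X \subset EL -> follower_opt_weak directed tl hd EL s t d X Y ->
  st_path directed tl hd s t P -> P \subset X :|: Y ->
  follower_opt_str directed tl hd EL s t d (P :&: EL) (P :\: EL).
Proof.
move=> XEL [YEL _ Yopt] stP PXY.
have /andP[PIX PDY] := subset_splitU XEL YEL PXY.
split; first exact: subsetDr.
  by rewrite setID.
move=> Y' Y'EL stQ; apply: le_trans (le_cost d_ge0 PDY) _; apply: Yopt => //.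
by exists (P :&: EL :|: Y'); split; last exact: finset.setSU PIX.
Qed.

End Restriction.

Theorem corollary3p5 (R : realType) (V E : finType) (directed : bool)
    (tl hd : E -> V) (EL : {set E}) (s t : V) (c d : E -> R) :
  simple_graph directed tl hd ->
  (forall e, 0 <= c e) -> (forall e, 0 <= d e) ->
  (exists P, st_path directed tl hd s t P) ->
  (OPT_str directed tl hd EL s t c d <= OPT_weak directed tl hd EL s t c d)%E.
Proof.
move=> _ c_ge0 d_ge0 _.
apply: le_ereal_inf_tmp => _ [[X Y] /= [XEL Yopt] <-].
have [_ [P [stP PXY]] _] := Yopt.
apply: ge_ereal_inf; exists (cost c P)%:E; last by rewrite lee_fin le_cost.
exists (P :&: EL, P :\: EL); last by rewrite /= setID.
by split; [exact: subsetIr | exact: follower_opt_weak_restrict Yopt stP PXY].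
Qed.
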